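(* Let $\mathcal M$ be a model category (fibrations $\mathsf{Fib}$, cofibrations $\mathsf{Cof}$, weak equivalences $\mathsf{WE}$) and let $\mathsf Z\subseteq\mathsf{Fib}\cap\mathsf{WE}$ be a class of morphisms such that every morphism $f$ of $\mathcal M$ factors as $f=qj$ with $q\in\mathsf{Post}_{\mathsf Z}$ and $j\in\mathsf{Cof}$. If $\mathbb K$ is a comonad on $\mathcal M$ satisfying axioms (K0)–(K3), then every morphism $f$ of $\mathcal M_{\mathbb K}$ factors as $f=qj$ with $q\in\mathsf{Post}_{F_{\mathbb K}\mathsf Z}$ and $j\in U_{\mathbb K}^{-1}(\mathsf{Cof})$.
   Context: For a comonad $\mathbb K=(K,\Delta,\varepsilon)$ on $\mathcal M$, $\mathcal M_{\mathbb K}$ is the category of $\mathbb K$-coalgebras $(D,\delta)$ with $\delta:D\to KD$ satisfying $K\delta\circ\delta=\Delta_D\circ\delta$, $\varepsilon_D\circ\delta=\mathrm{Id}$; $U_{\mathbb K}$ is the forgetful functor and $F_{\mathbb K}X=(KX,\Delta_X)$, $F_{\mathbb K}f=Kf$ its right adjoint; $F_{\mathbb K}\mathsf Z=\{F_{\mathbb K}z:z\in\mathsf Z\}$. For a class $\mathsf Y$ of morphisms, $\mathsf{Post}_{\mathsf Y}$ is the class of composites $\lim_{\beta<\lambda}Y_\beta\to Y_0$ of functors $Y:\lambda^{op}\to\mathcal C$ ($\lambda$ an ordinal) in which each $Y_{\beta+1}\to Y_\beta$ is a pullback of a morphism in $\mathsf Y$ and $Y_\gamma=\lim_{\beta<\gamma}Y_\beta$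 for limit ordinals $\gamma$. Axioms: (K0) $\mathcal M_{\mathbb K}$ is complete; (K1) $\delta\in\mathsf{Cof}$ for every coalgebra $(D,\delta)$; (K2) $K$ preserves cofibrations; (K3) for every $i:(C,\gamma)\to F_{\mathbb K}X$ in $U_{\mathbb K}^{-1}(\mathsf{Cof})$ and every $g:(C,\gamma)\to(D,\delta)$ in $\mathcal M_{\mathbb K}$, the induced $(i,g):(C,\gamma)\to F_{\mathbb K}X\times(D,\delta)$ lies in $U_{\mathbb K}^{-1}(\mathsf{Cof})$ (if the product exists). *)

From Stdlib Require Import ProofIrrelevance Wellfounded.
Set Universe Polymorphism.
Unset Universe Minimization ToSet.


Cumulative Record Category@{o h} := {
  Obj :> Type@{o};
  Hom : Obj -> Obj -> Type@{h};
  idm : forall A, Hom A A;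
  comp : forall A B C, Hom B C -> Hom A B -> Hom A C;
  comp_assoc : forall A B C D (f : Hom A B) (g : Hom B C) (h : Hom C D),
      comp A C D h (comp A B C g f) = comp A B D (comp B C D h g) f;
  comp_id_l : forall A B (f : Hom A B), comp A B B (idm B) f = f;
  comp_id_r : forall A B (f : Hom A B), comp A A B f (idm A) = f
}.
Arguments Hom {c} A B.
Arguments idm {c} A.
Arguments comp {c A B C} g f.
Notation "g ∘ f" := (comp g f) (at level 40, left associativity).

Definition MorClass (C : Category) := forall A B : C, Hom A B -> Prop.

Definition op (C : Category) : Category.
Proof.
  refine {| Obj := Obj C; Hom := fun A B => @Hom C B A;
            idm := fun A => idm A;
            comp := fun A B D g f => f ∘ g |}.
  - intros; symmetry; apply comp_assoc.
  - intros; apply comp_id_r.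
  - intros; apply comp_id_l.
Defined.

Record Functor (C D : Category) := {
  fobj :> C -> D;
  fmap : forall A B : C, Hom A B -> Hom (fobj A) (fobj B);
  fmap_id : forall A, fmap A A (idm A) = idm (fobj A);
  fmap_comp : forall A B E (f : Hom A B) (g : Hom B E),
      fmap A E (g ∘ f) = fmap B E g ∘ fmap A B f
}.
Arguments fmap {C D} _ {A B} _.

Definition IsCone {J C : Category} (Y : Functor J C) (L : C)
    (pi : forall j : J, Hom L (Y j)) : Prop :=
  forall (j j' : J) (u : Hom j j'), fmap Y u ∘ pi j = pi j'.

Definition IsLimit {J C : Category} (Y : Functor J C) (L : C)
    (pi : forall j : J, Hom L (Y j)) : Prop :=
  IsCone Y L pi /\
  forall (L' : C) (pi' : forall j : J, Hom L' (Y j)), IsCone Y L' pi' ->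
    exists! h : Hom L' L, forall j, pi j ∘ h = pi' j.

(** Completeness: every small diagram (objects and morphisms living in the
    universe of the hom-types of [C]) has a limit. *)
Definition complete@{o h} (C : Category@{o h}) : Prop :=
  forall (J : Category@{h h}) (Y : Functor J C),
    exists (L : C) (pi : forall j : J, Hom L (Y j)), IsLimit Y L pi.

Definition cocomplete@{o h} (C : Category@{o h}) : Prop := complete (op C).

Definition IsProduct {C : Category} {P X Y : C} (p1 : Hom P X) (p2 : Hom P Y)
  : Prop :=
  forall (Q : C) (q1 : Hom Q X) (q2 : Hom Q Y),
    exists! h : Hom Q P, p1 ∘ h = q1 /\ p2 ∘ h = q2.

(** Pullback squares
       A --h--> X
       |f       |y
       v        v
       B --g--> W                                                  *)
Definition IsPullback {C : Category} {A B X W : C}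
    (f : Hom A B) (h : Hom A X) (y : Hom X W) (g : Hom B W) : Prop :=
  y ∘ h = g ∘ f /\
  forall (Q : C) (a : Hom Q X) (b : Hom Q B), y ∘ a = g ∘ b ->
    exists! k : Hom Q A, h ∘ k = a /\ f ∘ k = b.

Definition PullbackOfClass {C : Category} (Yc : MorClass C) {A B : C}
    (f : Hom A B) : Prop :=
  exists (X W : C) (y : Hom X W) (g : Hom B W) (h : Hom A X),
    Yc X W y /\ IsPullback f h y g.

Definition IsRetractOf {C : Category} {A B A' B' : C}
    (f : Hom A B) (g : Hom A' B') : Prop :=
  exists (i : Hom A A') (r : Hom A' A) (i' : Hom B B') (r' : Hom B' B),
    r ∘ i = idm A /\ r' ∘ i' = idm B /\ g ∘ i = i' ∘ f /\ f ∘ r = r' ∘ g.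

Definition Lifts {C : Category} {A B X Y : C} (i : Hom A B) (p : Hom X Y)
  : Prop :=
  forall (u : Hom A X) (v : Hom B Y), p ∘ u = v ∘ i ->
    exists d : Hom B X, d ∘ i = u /\ p ∘ d = v.

Definition ClassInter {C : Category} (P Q : MorClass C) : MorClass C :=
  fun A B f => P A B f /\ Q A B f.

(** Model category structure (Quillen's closed model category, with small
    limits and colimits). *)
Record IsModelCategory {C : Category} (Fib Cof WE : MorClass C) : Prop := {
  mc_complete : complete C;
  mc_cocomplete : cocomplete C;
  mc_2of3_gf : forall (A B D : C) (f : Hom A B) (g : Hom B D),
      WE _ _ f -> WE _ _ g -> WE _ _ (g ∘ f);
  mc_2of3_g : forall (A B D : C) (f : Hom A B) (g : Hom B D),
      WE _ _ f -> WE _ _ (g ∘ f) -> WE _ _ g;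
  mc_2of3_f : forall (A B D : C) (f : Hom A B) (g : Hom B D),
      WE _ _ g -> WE _ _ (g ∘ f) -> WE _ _ f;
  mc_retract_Fib : forall (A B A' B' : C) (f : Hom A B) (g : Hom A' B'),
      IsRetractOf f g -> Fib _ _ g -> Fib _ _ f;
  mc_retract_Cof : forall (A B A' B' : C) (f : Hom A B) (g : Hom A' B'),
      IsRetractOf f g -> Cof _ _ g -> Cof _ _ f;
  mc_retract_WE : forall (A B A' B' : C) (f : Hom A B) (g : Hom A' B'),
      IsRetractOf f g -> WE _ _ g -> WE _ _ f;
  mc_lift_trivcof : forall (A B X Y : C) (i : Hom A B) (p : Hom X Y),
      Cof _ _ i -> WE _ _ i -> Fib _ _ p -> Lifts i p;
  mc_lift_trivfib : forall (A B X Y : C) (i : Hom A B) (p : Hom X Y),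
      Cof _ _ i -> Fib _ _ p -> WE _ _ p -> Lifts i p;
  mc_fact_trivcof : forall (A B : C) (f : Hom A B),
      exists (X : C) (i : Hom A X) (p : Hom X B),
        Cof _ _ i /\ WE _ _ i /\ Fib _ _ p /\ f = p ∘ i;
  mc_fact_trivfib : forall (A B : C) (f : Hom A B),
      exists (X : C) (i : Hom A X) (p : Hom X B),
        Cof _ _ i /\ Fib _ _ p /\ WE _ _ p /\ f = p ∘ i
}.

(** * Ordinals (as well-ordered types) and transfinite towers *)

Cumulative Record Ordinal@{h} := {
  ord :> Type@{h};
  olt : ord -> ord -> Prop;
  olt_trans : forall x y z, olt x y -> olt y z -> olt x z;
  olt_irrefl : forall x, ~ olt x x;
  olt_total : forall x y, olt x y \/ x = y \/ olt y x;
  olt_wf : well_founded olt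
}.
Arguments olt {o} x y.
Arguments olt_trans {o x y z} _ _.
Arguments olt_total {o} x y.
Arguments olt_irrefl {o} x.

Definition ole {l : Ordinal} (x y : l) : Prop := olt x y \/ x = y.

Definition osucc {l : Ordinal} (b b' : l) : Prop :=
  olt b b' /\ forall d, olt b d -> ole b' d.

Definition olimit {l : Ordinal} (g : l) : Prop :=
  (exists b, olt b g) /\ (forall b, olt b g -> exists d, olt b d /\ olt d g).

Lemma ole_trans {l : Ordinal} (a b c : l) : ole c b -> ole b a -> ole c a.
Proof.
  intros [g|g] [f|f].
  - left; exact (olt_trans g f).
  - left; subst; exact g.
  - left; subst; exact f.
  - right; subst; reflexivity.
Qed.

(** The category [l^op]: a unique morphism [b -> g] iff [g <= b]. *)
Definition OrdOp@{h +} (l : Ordinal@{h}) : Category@{h h}.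
Proof.
  refine {| Obj := ord l; Hom := fun b g => ole g b;
            idm := fun b => or_intror eq_refl;
            comp := fun a b c (g : ole c b) (f : ole b a) => ole_trans a b c g f |}.
  - intros; apply proof_irrelevance.
  - intros; apply proof_irrelevance.
  - intros; apply proof_irrelevance.
Defined.

Definition subord@{h +} (l : Ordinal@{h}) (g : l) : Ordinal@{h}.
Proof.
  refine {| ord := { b : l | olt b g };
            olt := fun x y => olt (proj1_sig x) (proj1_sig y) |}.
  - intros x y z; apply (@olt_trans l).
  - intros x; apply olt_irrefl.
  - intros [x hx] [y hy]; simpl.
    destruct (olt_total x y) as [H|[H|H]]; auto.
    right; left; subst; f_equal; apply proof_irrelevance.
  - apply (wf_inverse_image _ _ olt (fun x => proj1_sig x)), olt_wf.
Defined.

Lemma ole_sub (l : Ordinal) (g : l) (x y : subord l g) :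
  ole x y -> ole (proj1_sig x) (proj1_sig y).
Proof. intros [H|H]; [left; exact H | right; subst; reflexivity]. Qed.

Definition restrict {C : Category} {l : Ordinal} (Y : Functor (OrdOp l) C)
    (g : l) : Functor (OrdOp (subord l g)) C.
Proof.
  refine {| fobj := fun b : OrdOp (subord l g) => @fobj (OrdOp l) C Y (proj1_sig (b : {x : l | olt x g}));
            fmap := fun (a b : OrdOp (subord l g)) (u : @ole (subord l g) b a) =>
              @fmap _ _ Y (proj1_sig (a : {x : l | olt x g})) (proj1_sig (b : {x : l | olt x g})) (ole_sub _ _ _ _ u) |}.
  - intros a. rewrite <- fmap_id. f_equal. apply proof_irrelevance.
  - intros a b e f g'. rewrite <- fmap_comp. f_equal. apply proof_irrelevance.
Defined.

Definition restrict_cone {C : Category} {l : Ordinal} (Y : Functor (OrdOp l) C)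
    (g : l) : forall b : OrdOp (subord l g), Hom (Y g) (restrict Y g b) :=
  fun b => @fmap _ _ Y g (proj1_sig (b : {x : l | olt x g})) (or_introl (proj2_sig (b : {x : l | olt x g}))).

(** [Post Yc]: composites [lim_{b<l} Y_b -> Y_0] of towers [Y : l^op -> C]
    in which each [Y_{b+1} -> Y_b] is a pullback of a morphism of [Yc] and
    [Y_g = lim_{b<g} Y_b] for limit ordinals [g]. *)
Inductive Post@{o h +} {C : Category@{o h}} (Yc : MorClass C)
  : forall A B : C, Hom A B -> Prop :=
| post_intro :
    forall (l : Ordinal@{h}) (Y : Functor (OrdOp@{h _} l) C) (z0 : l)
      (Hz0 : forall b : l, ole z0 b)
      (Hsucc : forall (b b' : l) (u : @Hom (OrdOp l) b' b),
          osucc b b' -> PullbackOfClass Yc (fmap Y u))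
      (Hlim : forall g : l, olimit g -> IsLimit (restrict Y g) (Y g) (restrict_cone Y g))
      (L : C) (pi : forall j : OrdOp l, Hom L (Y j)),
      IsLimit Y L pi -> Post Yc L (Y z0) (pi z0).

Record Comonad (C : Category) := {
  K :> Functor C C;
  Delta : forall X : C, Hom (K X) (K (K X));
  eps : forall X : C, Hom (K X) X;
  Delta_nat : forall (X Y : C) (f : Hom X Y),
      Delta Y ∘ fmap K f = fmap K (fmap K f) ∘ Delta X;
  eps_nat : forall (X Y : C) (f : Hom X Y), eps Y ∘ fmap K f = f ∘ eps X;
  counit_l : forall X : C, eps (K X) ∘ Delta X = idm (K X);
  counit_r : forall X : C, fmap K (eps X) ∘ Delta X = idm (K X);
  coassoc : forall X : C, fmap K (Delta X) ∘ Delta X = Delta (K X) ∘ Delta X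
}.
Arguments Delta {C} _ X.
Arguments eps {C} _ X.

Section Coalgebras.
Context {C : Category} (KK : Comonad C).

Record Coalg := {
  carrier : C;
  coact : Hom carrier (KK carrier);
  coalg_coassoc : fmap KK coact ∘ coact = Delta KK carrier ∘ coact;
  coalg_counit : eps KK carrier ∘ coact = idm carrier
}.

Record CoalgHom (A B : Coalg) := {
  chom :> Hom (carrier A) (carrier B);
  chom_comm : coact B ∘ chom = fmap KK chom ∘ coact A
}.
Arguments chom {A B} _.
Arguments chom_comm {A B} _.

Lemma CoalgHom_eq (A B : Coalg) (f g : CoalgHom A B) :
  chom f = chom g -> f = g.
Proof.
  destruct f as [f hf], g as [g hg]; simpl; intros ->.
  f_equal; apply proof_irrelevance.
Qed.

Definition coalg_id (A : Coalg) : CoalgHom A A.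
Proof.
  refine {| chom := idm (carrier A) |}.
  rewrite fmap_id, comp_id_l, comp_id_r; reflexivity.
Defined.

Definition coalg_comp (A B D : Coalg) (g : CoalgHom B D) (f : CoalgHom A B)
  : CoalgHom A D.
Proof.
  refine {| chom := chom g ∘ chom f |}.
  rewrite fmap_comp, comp_assoc, chom_comm, <- comp_assoc, chom_comm,
    comp_assoc; reflexivity.
Defined.

Definition CoalgCat : Category.
Proof.
  refine {| Obj := Coalg; Hom := CoalgHom; idm := coalg_id;
            comp := coalg_comp |}.
  - intros; apply CoalgHom_eq; simpl; apply comp_assoc.
  - intros; apply CoalgHom_eq; simpl; apply comp_id_l.
  - intros; apply CoalgHom_eq; simpl; apply comp_id_r.
Defined.

Definition FKobj (X : C) : Coalg :=
  {| carrier := KK X; coact := Delta KK X;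
     coalg_coassoc := @coassoc C KK X; coalg_counit := @counit_l C KK X |}.

Definition FKmap (X Y : C) (f : Hom X Y) : CoalgHom (FKobj X) (FKobj Y) :=
  {| chom := (fmap KK f : Hom (carrier (FKobj X)) (carrier (FKobj Y))); chom_comm := @Delta_nat C KK X Y f |}.

Inductive FKclass (Z : MorClass C) : MorClass CoalgCat :=
| fk_intro : forall (X Y : C) (z : Hom X Y), Z X Y z ->
    FKclass Z (FKobj X) (FKobj Y) (FKmap X Y z).

Definition Uinv (P : MorClass C) : MorClass CoalgCat :=
  fun A B g => P _ _ (chom g).

End Coalgebras.

(* Let [1] be terminal in [M] and factor [U A -> 1] as [q ∘ j] with [q : L -> 1] in
   [Post_Z] and [j] a cofibration. Since [F_K 1] is terminal among coalgebras, [B] is the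
   product [F_K 1 × B], and [F_K q × B : F_K L × B -> B] is in [Post_{F_K Z}]: the right
   adjoint [F_K] and the functor [- × B] both preserve pullbacks and limits of towers.
   The other factor [(j^♯, f) : A -> F_K L × B] is a cofibration by (K3), because the
   transpose [j^♯ = K j ∘ δ_A] is one by (K1) and (K2). *)
From Stdlib Require Import ProofIrrelevance ClassicalEpsilon.
Set Universe Polymorphism.
Unset Universe Minimization ToSet.

Definition functor_comp {A B C : Category} (G : Functor B C) (F : Functor A B) :
  Functor A C.
Proof.
  refine {| fobj := fun a => G (F a); fmap := fun a b u => fmap G (fmap F u) |}.
  - intros a; rewrite !fmap_id; reflexivity.
  - intros a b c u v; rewrite !fmap_comp; reflexivity.
Defined.

Record ProductOf {C : Category} (X Y : C) := {
  prod_obj : C;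
  prod_fst : Hom prod_obj X;
  prod_snd : Hom prod_obj Y;
  prod_is_product : IsProduct prod_fst prod_snd
}.
Arguments prod_obj {C X Y} _.
Arguments prod_fst {C X Y} _.
Arguments prod_snd {C X Y} _.
Arguments prod_is_product {C X Y} _.

Definition IsTerminal {C : Category} (T : C) : Prop :=
  forall X : C, exists t : Hom X T, forall t' : Hom X T, t' = t.

Section Products.
Context {C : Category}.

Lemma product_hom_ext {P X Y : C} {p1 : Hom P X} {p2 : Hom P Y}
  (H : IsProduct p1 p2) {Q : C} (h h' : Hom Q P) :
  p1 ∘ h = p1 ∘ h' -> p2 ∘ h = p2 ∘ h' -> h = h'.
Proof.
  intros E1 E2. destruct (H Q (p1 ∘ h') (p2 ∘ h')) as [k [_ Hk]].
  rewrite <- (Hk h (conj E1 E2)). apply Hk; split; reflexivity.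
Qed.

Definition pair {X Y : C} (P : ProductOf X Y) {Q : C} (q1 : Hom Q X) (q2 : Hom Q Y) :
  Hom Q (prod_obj P) :=
  proj1_sig (constructive_indefinite_description _ (prod_is_product P Q q1 q2)).

Lemma pair_spec {X Y : C} (P : ProductOf X Y) {Q : C} (q1 : Hom Q X) (q2 : Hom Q Y) :
  prod_fst P ∘ pair P q1 q2 = q1 /\ prod_snd P ∘ pair P q1 q2 = q2.
Proof.
  unfold pair.
  exact (proj1 (proj2_sig (constructive_indefinite_description _ (prod_is_product P Q q1 q2)))).
Qed.

Lemma pair_fst {X Y : C} (P : ProductOf X Y) {Q : C} (q1 : Hom Q X) (q2 : Hom Q Y) :
  prod_fst P ∘ pair P q1 q2 = q1.
Proof. apply pair_spec. Qed.

Lemma pair_snd {X Y : C} (P : ProductOf X Y) {Q : C} (q1 : Hom Q X) (q2 : Hom Q Y) :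
  prod_snd P ∘ pair P q1 q2 = q2.
Proof. apply pair_spec. Qed.

Lemma product_with_terminal {T B : C} (HT : IsTerminal T) (t : Hom B T) :
  IsProduct t (idm B).
Proof.
  intros Q r1 r2. exists r2. split; [split|].
  - destruct (HT Q) as [s Hs]. rewrite (Hs r1). apply Hs.
  - apply comp_id_l.
  - intros h [_ E]. rewrite comp_id_l in E. symmetry; exact E.
Qed.

Definition EmptyCat : Category.
Proof.
  refine {| Obj := Empty_set; Hom := fun _ _ => unit; idm := fun _ => tt;
            comp := fun _ _ _ _ _ => tt |}; intros [].
Defined.

Definition BoolCat : Category.
Proof.
  refine {| Obj := bool; Hom := fun a b => a = b; idm := fun a => eq_refl;
            comp := fun a b c g f => eq_trans f g |}; intros; apply proof_irrelevance.
Defined.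

Definition empty_diagram : Functor EmptyCat C.
Proof.
  unshelve refine {| fobj := fun a : EmptyCat => match a with end;
                     fmap := fun a _ _ => match a with end |}; intros [].
Defined.

Definition pair_diagram (X Y : C) : Functor BoolCat C.
Proof.
  refine {| fobj := fun b : BoolCat => if b then X else Y;
            fmap := fun a b (e : a = b) => match e in _ = b' return
                 Hom (if a then X else Y) (if b' then X else Y) with eq_refl => idm _ end |}.
  - reflexivity.
  - intros a b c f g. destruct f, g. symmetry; apply comp_id_l.
Defined.

Lemma complete_terminal : complete C -> exists T : C, IsTerminal T.
Proof.
  intros Hc. destruct (Hc EmptyCat empty_diagram) as [T [pi [_ HU]]].
  exists T. intros X.
  unshelve edestruct (HU X) as [t [_ Ht]]; [intros []| intros []|].
  exists t. intros t'. symmetry. apply Ht. intros [].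
Qed.

Lemma complete_product : complete C -> forall X Y : C, inhabited (ProductOf X Y).
Proof.
  intros Hc X Y. destruct (Hc BoolCat (pair_diagram X Y)) as [P [pi [_ HU]]].
  constructor. exists P (pi true) (pi false). intros Q q1 q2.
  destruct (HU Q (fun b => match b return Hom Q (pair_diagram X Y b) with
                           | true => q1 | false => q2 end)) as [h [Hh Hu]].
  - intros j j' []; destruct j; apply comp_id_l.
  - exists h. split; [split; [apply (Hh true) | apply (Hh false)]|].
    intros h' [E1 E2]. apply Hu. intros []; assumption.
Qed.

End Products.

Section ProductWithObject.
Context {C : Category} (D : C).

Lemma pullback_product {A B X W : C} (f : Hom A B) (h : Hom A X) (y : Hom X W)
  (g : Hom B W) (PA : ProductOf A D) (PB : ProductOf B D) (v : Hom (prod_obj PA) (prod_obj PB)) :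
  prod_fst PB ∘ v = f ∘ prod_fst PA -> prod_snd PB ∘ v = prod_snd PA ->
  IsPullback f h y g -> IsPullback v (h ∘ prod_fst PA) y (g ∘ prod_fst PB).
Proof.
  intros Hv1 Hv2 [Hc Hu]. split.
  - rewrite comp_assoc, Hc, <- !comp_assoc, Hv1. reflexivity.
  - intros Q a b E. rewrite <- comp_assoc in E.
    destruct (Hu Q a (prod_fst PB ∘ b) E) as [k [[Hk1 Hk2] Hk]].
    exists (pair PA k (prod_snd PB ∘ b)). split; [split|].
    + rewrite <- comp_assoc, pair_fst. exact Hk1.
    + apply (product_hom_ext (prod_is_product PB)).
      * rewrite comp_assoc, Hv1, <- comp_assoc, pair_fst. exact Hk2.
      * rewrite comp_assoc, Hv2, pair_snd. reflexivity.
    + intros k' [E1 E2]. apply (product_hom_ext (prod_is_product PA)).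
      * rewrite pair_fst. apply Hk. split.
        -- rewrite comp_assoc. exact E1.
        -- rewrite <- E2, !comp_assoc, Hv1. reflexivity.
      * rewrite pair_snd, <- E2, comp_assoc, Hv2. reflexivity.
Qed.

Section ProductFunctor.
Context {J : Category} (U : Functor J C) (prods : forall j, ProductOf (U j) D).

Definition product_map (a b : J) (u : Hom a b) : Hom (prod_obj (prods a)) (prod_obj (prods b)) :=
  pair (prods b) (fmap U u ∘ prod_fst (prods a)) (prod_snd (prods a)).

Lemma product_map_fst a b u :
  prod_fst (prods b) ∘ product_map a b u = fmap U u ∘ prod_fst (prods a).
Proof. apply pair_fst. Qed.

Lemma product_map_snd a b u : prod_snd (prods b) ∘ product_map a b u = prod_snd (prods a).
Proof. apply pair_snd. Qed.

Definition product_functor : Functor J C.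
Proof.
  refine {| fobj := fun j => prod_obj (prods j); fmap := product_map |}.
  - intros a. apply (product_hom_ext (prod_is_product (prods a))).
    + rewrite product_map_fst, fmap_id, comp_id_l, comp_id_r. reflexivity.
    + rewrite product_map_snd, comp_id_r. reflexivity.
  - intros a b c u v. apply (product_hom_ext (prod_is_product (prods c))).
    + rewrite product_map_fst, comp_assoc, product_map_fst, <- comp_assoc,
        product_map_fst, comp_assoc, <- fmap_comp. reflexivity.
    + rewrite product_map_snd, comp_assoc, !product_map_snd. reflexivity.
Defined.

End ProductFunctor.

(** [- × D] preserves limits of nonempty diagrams whose shape is totally preordered:
    there all legs of a cone agree after projecting to [D]. *)
Lemma limit_product (J : Category) (j0 : J)
  (Hconn : forall j j' : J, inhabited (Hom j j') \/ inhabited (Hom j' j))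
  (U : Functor J C) (L : C) (pi : forall j, Hom L (U j)) (HL : IsLimit U L pi)
  (V : Functor J C) (p1 : forall j, Hom (V j) (U j)) (p2 : forall j, Hom (V j) D)
  (Hp : forall j, IsProduct (p1 j) (p2 j))
  (Hn1 : forall j j' (u : Hom j j'), p1 j' ∘ fmap V u = fmap U u ∘ p1 j)
  (Hn2 : forall j j' (u : Hom j j'), p2 j' ∘ fmap V u = p2 j)
  (PL : ProductOf L D) (pi' : forall j, Hom (prod_obj PL) (V j))
  (Hpi1 : forall j, p1 j ∘ pi' j = pi j ∘ prod_fst PL)
  (Hpi2 : forall j, p2 j ∘ pi' j = prod_snd PL) :
  IsLimit V (prod_obj PL) pi'.
Proof.
  destruct HL as [Hc Hu]. split.
  - intros j j' u. apply (product_hom_ext (Hp j')).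
    + rewrite comp_assoc, Hn1, <- comp_assoc, Hpi1, comp_assoc, Hc, Hpi1. reflexivity.
    + rewrite comp_assoc, Hn2, !Hpi2. reflexivity.
  - intros Q c Hcc.
    assert (Hmc : IsCone U Q (fun j => p1 j ∘ c j)).
    { intros j j' u. rewrite comp_assoc, <- Hn1, <- comp_assoc, Hcc. reflexivity. }
    destruct (Hu Q _ Hmc) as [m [Hm Hmu]].
    assert (Hsnd : forall j, p2 j ∘ c j = p2 j0 ∘ c j0).
    { intros j. destruct (Hconn j0 j) as [[u]|[u]];
        rewrite <- (Hcc _ _ u), comp_assoc, Hn2; reflexivity. }
    exists (pair PL m (p2 j0 ∘ c j0)). split.
    + intros j. apply (product_hom_ext (Hp j)).
      * rewrite comp_assoc, Hpi1, <- comp_assoc, pair_fst. apply Hm.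
      * rewrite comp_assoc, Hpi2, pair_snd. symmetry. apply Hsnd.
    + intros h Hh. apply (product_hom_ext (prod_is_product PL)).
      * rewrite pair_fst. apply Hmu. intros j.
        rewrite <- Hh, comp_assoc, <- Hpi1, <- comp_assoc. reflexivity.
      * rewrite pair_snd, <- (Hpi2 j0), <- comp_assoc, Hh. reflexivity.
Qed.

End ProductWithObject.

Section Cofree.
Context {M : Category} (KK : Comonad M).
Local Notation CC := (CoalgCat KK).

Definition Cofree : Functor M CC.
Proof.
  refine {| fobj := fun X : M => (FKobj KK X : CC); fmap := FKmap KK |}.
  - intros X; apply CoalgHom_eq; apply fmap_id.
  - intros X Y W f g; apply CoalgHom_eq; apply fmap_comp.
Defined.

(** The two directions of the adjunction [U_K ⊣ F_K]. *)
Definition cofree_transpose (Q : CC) (X : M) (m : Hom (carrier KK Q) X) :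
  Hom Q (Cofree X).
Proof.
  refine {| chom := (fmap KK m ∘ coact KK Q : Hom (carrier KK Q) (carrier KK (FKobj KK X))) |}.
  simpl. rewrite comp_assoc, Delta_nat, <- comp_assoc, <- coalg_coassoc,
    comp_assoc, <- fmap_comp. reflexivity.
Defined.

Definition cofree_untranspose {Q : CC} {X : M} (k : Hom Q (Cofree X)) :
  Hom (carrier KK Q) X :=
  eps KK X ∘ chom KK _ _ k.

Lemma untranspose_transpose (Q : CC) (X : M) (m : Hom (carrier KK Q) X) :
  cofree_untranspose (cofree_transpose Q X m) = m.
Proof.
  unfold cofree_untranspose; simpl.
  rewrite comp_assoc, eps_nat, <- comp_assoc, coalg_counit. apply comp_id_r.
Qed.

Lemma untranspose_inj (Q : CC) (X : M) (k k' : Hom Q (Cofree X)) :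
  cofree_untranspose k = cofree_untranspose k' -> k = k'.
Proof.
  (* a coalgebra map into [F_K X] is [K (ε ∘ k) ∘ δ] by the counit law *)
  assert (Hk : forall k : Hom Q (Cofree X),
             chom KK _ _ k = fmap KK (cofree_untranspose k) ∘ coact KK Q).
  { intros k0. unfold cofree_untranspose.
    pose proof (chom_comm KK _ _ k0) as Hc. cbn in Hc |- *.
    rewrite fmap_comp, <- comp_assoc, <- Hc, comp_assoc, counit_r, comp_id_l. reflexivity. }
  intros E. apply CoalgHom_eq. rewrite (Hk k), (Hk k'), E. reflexivity.
Qed.

Lemma untranspose_fmap (Q : CC) (X W : M) (y : Hom X W) (k : Hom Q (Cofree X)) :
  cofree_untranspose (fmap Cofree y ∘ k) = y ∘ cofree_untranspose k.
Proof.
  unfold cofree_untranspose; simpl. rewrite comp_assoc, eps_nat, comp_assoc. reflexivity.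
Qed.

Lemma cofree_terminal (T : M) : IsTerminal T -> IsTerminal (Cofree T).
Proof.
  intros HT Q. destruct (HT (carrier KK Q)) as [t Ht].
  exists (cofree_transpose Q T t). intros t'. apply untranspose_inj.
  rewrite untranspose_transpose. apply Ht.
Qed.

Lemma cofree_pullback {A B X W : M} (f : Hom A B) (h : Hom A X) (y : Hom X W)
  (g : Hom B W) :
  IsPullback f h y g ->
  IsPullback (fmap Cofree f) (fmap Cofree h) (fmap Cofree y) (fmap Cofree g).
Proof.
  intros [Hc Hu]. split.
  - rewrite <- !fmap_comp, Hc. reflexivity.
  - intros Q a b E.
    assert (Hm : y ∘ cofree_untranspose a = g ∘ cofree_untranspose b).
    { rewrite <- !untranspose_fmap, E. reflexivity. }
    destruct (Hu _ _ _ Hm) as [k [[Hk1 Hk2] Hk]].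
    exists (cofree_transpose Q A k). split; [split|].
    + apply untranspose_inj. rewrite untranspose_fmap, untranspose_transpose. exact Hk1.
    + apply untranspose_inj. rewrite untranspose_fmap, untranspose_transpose. exact Hk2.
    + intros k' [E1 E2]. apply untranspose_inj. rewrite untranspose_transpose.
      apply Hk. rewrite <- !untranspose_fmap, E1, E2. split; reflexivity.
Qed.

Lemma cofree_limit (J : Category) (W : Functor J M) (L : M)
  (pi : forall j, Hom L (W j)) :
  IsLimit W L pi ->
  IsLimit (functor_comp Cofree W) (Cofree L) (fun j => fmap Cofree (pi j)).
Proof.
  intros [Hc Hu]. split.
  - intros j j' u.
    change (fmap Cofree (fmap W u) ∘ fmap Cofree (pi j) = fmap Cofree (pi j')).
    rewrite <- fmap_comp, Hc. reflexivity.
  - intros Q c Hcc.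
    assert (Hm : IsCone W (carrier KK Q) (fun j => cofree_untranspose (c j))).
    { intros j j' u. rewrite <- untranspose_fmap. f_equal. apply Hcc. }
    destruct (Hu _ _ Hm) as [m [Hm1 Hmu]].
    exists (cofree_transpose Q L m). split.
    + intros j. apply untranspose_inj. rewrite untranspose_fmap, untranspose_transpose.
      apply Hm1.
    + intros h Hh. apply untranspose_inj. rewrite untranspose_transpose.
      apply Hmu. intros j. rewrite <- (Hh j), untranspose_fmap. reflexivity.
Qed.

End Cofree.

Lemma exists_update {I : Type} {T : I -> Type} (d : forall i, T i) (i0 : I) (t : T i0) :
  exists d' : forall i, T i, d' i0 = t.
Proof.
  exists (fun i => match excluded_middle_informative (i0 = i) with
                   | left e => eq_rect i0 T t i e
                   | right _ => d i
                   end).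
  destruct (excluded_middle_informative (i0 = i0)) as [e|n]; [|congruence].
  rewrite (proof_irrelevance _ e eq_refl). reflexivity.
Qed.

Lemma ordop_total (l : Ordinal) (a b : OrdOp l) :
  inhabited (Hom a b) \/ inhabited (Hom b a).
Proof.
  destruct (olt_total a b) as [H|[H|H]].
  - right. constructor. left. exact H.
  - left. constructor. right. symmetry. exact H.
  - left. constructor. left. exact H.
Qed.

Section CofreeTower.
Context {M : Category} (KK : Comonad M) (Z : MorClass M) (D : CoalgCat KK).
Local Notation Cofree := (Cofree KK).

Variables (l : Ordinal) (Y : Functor (OrdOp l) M) (z0 : l).
Hypothesis Hz0 : forall b : l, ole z0 b.
Hypothesis Hsucc : forall (b b' : l) (u : @Hom (OrdOp l) b' b),
  osucc b b' -> PullbackOfClass Z (fmap Y u).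
Hypothesis Hlim : forall g : l, olimit g ->
  IsLimit (restrict Y g) (Y g) (restrict_cone Y g).
Variables (L : M) (pi : forall j : OrdOp l, Hom L (Y j)).
Hypothesis HL : IsLimit Y L pi.
Variable PL : ProductOf (Cofree L) D.

Lemma post_product_tower (prods : forall j : OrdOp l, ProductOf (Cofree (Y j)) D) :
  exists r : Hom (prod_obj PL) (prod_obj (prods z0)),
    Post (FKclass KK Z) _ _ r /\
    prod_fst (prods z0) ∘ r = fmap Cofree (pi z0) ∘ prod_fst PL /\
    prod_snd (prods z0) ∘ r = prod_snd PL.
Proof.
  set (V := product_functor D (functor_comp Cofree Y) prods).
  set (pi' := fun j => pair (prods j) (fmap Cofree (pi j) ∘ prod_fst PL) (prod_snd PL)).
  exists (pi' z0). split; [|split; [apply pair_fst | apply pair_snd]].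
  apply (post_intro _ l V z0 Hz0).
  - intros b b' u Hs. destruct (Hsucc b b' u Hs) as [X [W [y [g [h [Hz Hpb]]]]]].
    exists (Cofree X), (Cofree W), (fmap Cofree y),
      (fmap Cofree g ∘ prod_fst (prods b)), (fmap Cofree h ∘ prod_fst (prods b')).
    split; [exact (fk_intro KK Z X W y Hz)|].
    apply (pullback_product D (fmap Cofree (fmap Y u)) _ _ _ (prods b') (prods b)).
    + exact (product_map_fst D (functor_comp Cofree Y) prods _ _ u).
    + exact (product_map_snd D (functor_comp Cofree Y) prods _ _ u).
    + apply cofree_pullback, Hpb.
  - intros g Hg. destruct (proj1 Hg) as [b0 Hb0].
    apply (limit_product D (OrdOp (subord l g))
             (exist (fun b => olt b g) b0 Hb0 : subord l g) (ordop_total _)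
             (functor_comp Cofree (restrict Y g)) _ _
             (cofree_limit KK _ _ _ _ (Hlim g Hg)) (restrict V g)
             (fun j => prod_fst (prods (proj1_sig j)))
             (fun j => prod_snd (prods (proj1_sig j)))
             (fun j => prod_is_product (prods (proj1_sig j)))) with (PL := prods g); intros;
      first [ exact (product_map_fst D (functor_comp Cofree Y) prods _ _ _)
            | exact (product_map_snd D (functor_comp Cofree Y) prods _ _ _) ].
  - apply (limit_product D (OrdOp l) z0 (ordop_total l) (functor_comp Cofree Y) _ _
             (cofree_limit KK _ _ _ _ HL) V
             (fun j => prod_fst (prods j)) (fun j => prod_snd (prods j))
             (fun j => prod_is_product (prods j))); intros.
    + exact (product_map_fst D (functor_comp Cofree Y) prods _ _ _).
    + exact (product_map_snd D (functor_comp Cofree Y) prods _ _ _).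
    + apply pair_fst.
    + apply pair_snd.
Qed.

End CofreeTower.

Lemma post_cofree_product {M : Category} (KK : Comonad M) (HK : complete (CoalgCat KK))
  (Z : MorClass M) {A T : M} (q : Hom A T) :
  Post Z A T q -> forall (D : CoalgCat KK) (PT : ProductOf (Cofree KK T) D)
    (PA : ProductOf (Cofree KK A) D),
  exists r : Hom (prod_obj PA) (prod_obj PT),
    Post (FKclass KK Z) _ _ r /\
    prod_fst PT ∘ r = fmap (Cofree KK) q ∘ prod_fst PA /\ prod_snd PT ∘ r = prod_snd PA.
Proof.
  intros [l Y z0 Hz0 Hsucc Hlim L pi HL] D PT PA.
  (* the products of the tower are chosen arbitrarily except at its base, where [PT] is used *)
  pose (prods := fun j => epsilon (complete_product HK (Cofree KK (Y j)) D) (fun _ => True)).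
  destruct (exists_update prods z0 PT) as [prods' <-].
  apply post_product_tower; assumption.
Qed.

Section ModelCategory.
Context {C : Category} (Fib Cof WE : MorClass C) (HM : IsModelCategory Fib Cof WE).

(** The retract argument. *)
Lemma cof_of_lifts_trivfib (A B : C) (i : Hom A B) :
  (forall (X Y : C) (p : Hom X Y), Fib _ _ p -> WE _ _ p -> Lifts i p) -> Cof _ _ i.
Proof.
  intros H. destruct (mc_fact_trivfib _ _ _ HM A B i) as [X [c [p [Hc [Hp [Hw E]]]]]].
  destruct (H _ _ p Hp Hw c (idm B)) as [d [Hd1 Hd2]].
  { rewrite comp_id_l. symmetry. exact E. }
  apply (mc_retract_Cof _ _ _ HM _ _ _ _ i c); [|exact Hc].
  exists (idm A), (idm A), d, p. repeat split.
  - apply comp_id_l.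
  - exact Hd2.
  - rewrite comp_id_r. symmetry. exact Hd1.
  - rewrite comp_id_r. exact E.
Qed.

Lemma cof_comp (A B D : C) (f : Hom A B) (g : Hom B D) :
  Cof _ _ f -> Cof _ _ g -> Cof _ _ (g ∘ f).
Proof.
  intros Hf Hg. apply cof_of_lifts_trivfib. intros X Y p Hp Hw u v Ev.
  destruct (mc_lift_trivfib _ _ _ HM _ _ _ _ f p Hf Hp Hw u (v ∘ g)) as [d1 [E1 E2]].
  { rewrite Ev. apply comp_assoc. }
  destruct (mc_lift_trivfib _ _ _ HM _ _ _ _ g p Hg Hp Hw d1 v E2) as [d2 [F1 F2]].
  exists d2. split; [|exact F2]. rewrite comp_assoc, F1. exact E1.
Qed.

End ModelCategory.

Unset Universe Polymorphism.

Theorem proposition5p11 (M : Category) (Fib Cof WE : MorClass M)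
  (HM : IsModelCategory Fib Cof WE)
  (Z : MorClass M)
  (HZ : forall (A B : M) (z : Hom A B), Z A B z -> Fib A B z /\ WE A B z)
  (Hfact : forall (A B : M) (f : Hom A B),
      exists (X : M) (j : Hom A X) (q : Hom X B),
        Post Z _ _ q /\ Cof A X j /\ f = q ∘ j)
  (KK : Comonad M)
  (K0 : complete (CoalgCat KK))
  (K1 : forall D : Coalg KK, Cof _ _ (coact KK D))
  (K2 : forall (A B : M) (f : Hom A B), Cof A B f -> Cof _ _ (fmap KK f))
  (K3 : forall (C D : CoalgCat KK) (X : M)
          (i : Hom C (FKobj KK X)) (g : Hom C D),
      Uinv KK Cof _ _ i ->
      forall (P : CoalgCat KK) (p1 : Hom P (FKobj KK X)) (p2 : Hom P D),
        IsProduct p1 p2 ->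
        forall h : Hom C P, p1 ∘ h = i -> p2 ∘ h = g -> Uinv KK Cof _ _ h) :
  forall (A B : CoalgCat KK) (f : Hom A B),
    exists (X : CoalgCat KK) (j : Hom A X) (q : Hom X B),
      Post (FKclass KK Z) _ _ q /\ Uinv KK Cof _ _ j /\ f = q ∘ j.
Proof.
  intros A B f.
  destruct (complete_terminal (mc_complete _ _ _ HM)) as [T HT].
  destruct (HT (carrier KK A)) as [tA _], (HT (carrier KK B)) as [tB _].
  destruct (Hfact _ _ tA) as [L [j [q [Hq [Hj _]]]]].
  destruct (complete_product K0 (Cofree KK L) B) as [PL].
  pose (PT := {| prod_obj := B; prod_fst := cofree_transpose KK B T tB; prod_snd := idm B;
                 prod_is_product := product_with_terminal (cofree_terminal KK T HT) _ |}).
  destruct (post_cofree_product KK K0 Z q Hq B PT PL) as [r [Hr [_ Er]]].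
  unfold PT in Er; cbn [prod_snd] in Er. rewrite comp_id_l in Er. subst r.
  exists (prod_obj PL), (pair PL (cofree_transpose KK A L j) f), (prod_snd PL).
  split; [exact Hr|split].
  - refine (K3 A B L (cofree_transpose KK A L j) f _ _ _ _ (prod_is_product PL) _
              (pair_fst PL _ _) (pair_snd PL _ _)).
    apply (cof_comp _ _ _ HM); [apply K1 | apply K2, Hj].
  - symmetry. apply pair_snd.
Qed.
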